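(* Let $A\in\mathbb R^{d\times d}$ be symmetric with $\mathrm{Tr}(A)=0$, and let $k\ge1$ be an integer. Then $$A^{\tilde\otimes k}(I^{\otimes k-1})=\sum_{s=1}^k d_{k,s}\,A^s\cdot A^{\tilde\otimes k-s}(I^{\otimes(k-s)}),\qquad d_{k,s}:=2^{s-1}\frac{(2k-2s-1)!!\,(k-1)!}{(2k-1)!!\,(k-s)!},$$ with the convention $(-1)!!=1$.
   Context: For a $k$-tensor $T\in(\mathbb R^d)^{\otimes k}$, $\mathrm{Sym}(T)_{i_1\dots i_k}=\frac1{k!}\sum_{\pi\in S_k}T_{i_{\pi(1)}\dots i_{\pi(k)}}$. The symmetric tensor product is $A\tilde\otimes B=\mathrm{Sym}(A\otimes B)$, and $A^{\tilde\otimes k}=\mathrm{Sym}(A^{\otimes k})$, viewing the matrix $A$ as a 2-tensor (so $A^{\tilde\otimes k}$ is a symmetric $2k$-tensor). For a symmetric $k$-tensor $T$ and an $a$-tensor $M$ with $a\le k$, the contraction $T(M)$ is the $(k-a)$-tensor $T(M)_{i_1\dots i_{k-a}}=\sum_{j_1,\dots,j_a}T_{j_1\dots j_a i_1\dots i_{k-a}}M_{j_1\dots j_a}$. Thus $A^{\tilde\otimes k}(I^{\otimes k-1})$ is a $d\times d$ matrix, $A^{\tilde\otimes k-s}(I^{\otimes(k-s)})$ is a scalar (equal to $1$ when $s=k$), and $A^s$ is the matrix power. *)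

From HB Require Import structures.
From mathcomp Require Import all_boot all_order all_algebra all_fingroup.
Set Implicit Arguments. Unset Strict Implicit. Unset Printing Implicit Defensive.
Import Order.TTheory GRing.Theory Num.Theory.
Local Open Scope ring_scope.

Definition tensor (R : Type) (d n : nat) := n.-tuple 'I_d -> R.

Definition Sym (R : fieldType) d n (T : tensor R d n) : tensor R d n :=
  fun t => (n`!%:R)^-1 * \sum_(p : 'S_n) T [tuple tnth t (p j) | j < n].

Fixpoint prod_pairs (R : pzRingType) d (A : 'M[R]_d) (s : seq 'I_d) : R :=
  match s with
  | x :: y :: r => A x y * prod_pairs A r
  | _ => 1
  end.

(* The tensor power A^{\otimes k} of the matrix A (viewed as a 2-tensor),
   written out entrywise; it is used at order n = 2k:
   (A^{\otimes k})_{i_1 .. i_{2k}} = \prod_m A_{i_{2m-1} i_{2m}}. *)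
Definition mx_tpow (R : pzRingType) d (A : 'M[R]_d) (n : nat) : tensor R d n :=
  fun t => prod_pairs A (val t).
Arguments mx_tpow {R d} A n.

Definition mx_stpow (R : fieldType) d (A : 'M[R]_d) (n : nat) : tensor R d n :=
  Sym (mx_tpow A n).
Arguments mx_stpow {R d} A n.

Definition contract (R : pzRingType) d a b (T : tensor R d (a + b))
    (M : tensor R d a) : tensor R d b :=
  fun j => \sum_(i : a.-tuple 'I_d) T (cat_tuple i j) * M i.
Arguments contract {R d a b} T M.

Definition mx_of2 (R : pzRingType) d (T : tensor R d 2) : 'M[R]_d :=
  \matrix_(i, j) T [tuple i; j].

Definition scal_of0 (R : pzRingType) d (T : tensor R d 0) : R := T [tuple].

Fixpoint dfact (n : nat) : nat :=
  match n with
  | n'.+2 => n'.+2 * dfact n'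
  | _ => 1
  end.

Definition dcoef (R : fieldType) (k s : nat) : R :=
  (2 ^ (s - 1) * dfact ((2 * (k - s)).-1) * (k - 1)`!)%:R /
  (dfact ((2 * k).-1) * (k - s)`!)%:R.

(* Write W(s) for the entry of the symmetrised tensor power of A at an index
   sequence s; W is invariant under permutations of s.  Moving the partner of
   the first index into the first pair by a permutation that only relabels
   pairs (and, A being symmetric, leaves every product of pairs unchanged)
   gives the Wick recursion
     |s| W(x s) = \sum_b A_{x s_b} W(s with s_b removed)      (|s| odd).
   Let M_m be the matrix obtained from W(i j ...) by contracting m pairs of
   indices with the identity, and c_m the fully contracted scalar.  Applying
   the recursion to i, the partner of i is either j or one of the 2m
   contracted indices, whence
     (2m + 1) M_m = c_m A + 2m A M_(m-1),
   and unrolling this recursion produces the coefficients d_(k,s). *)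

From HB Require Import structures.
From mathcomp Require Import all_boot all_order all_algebra all_fingroup.
From mathcomp Require Import ring zify.
(* Imported last, so that [Sym] is the symmetrisation of Defs and not the
   permutation group of perm.v. *)
From Pilot Require Import Defs.
Set Implicit Arguments. Unset Strict Implicit. Unset Printing Implicit Defensive.
Import Order.TTheory GRing.Theory Num.Theory.
Local Open Scope ring_scope.

Section SumLiftPerm.
Variables (R : nmodType) (n : nat) (i j : 'I_n.+1).

Lemma lift_perm_inj : injective (@lift_perm n i j).
Proof.
move=> s t /permP eq_st; apply/permP => k.
by have := eq_st (lift i k); rewrite !lift_perm_lift => /lift_inj.
Qed.

Lemma lift_permP (s : 'S_n.+1) : s i = j -> exists t : 'S_n, s = lift_perm i j t.
Proof.
move=> sij; pose lower k := odflt k (unlift j (s (lift i k))).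
have lowerK k : lift j (lower k) = s (lift i k).
  have : j != s (lift i k) by rewrite -sij (inj_eq perm_inj) neq_lift.
  by case/unlift_some => k' sk eqk; rewrite /lower eqk -sk.
have lower_inj : injective lower.
  by move=> k k' /(congr1 (lift j)); rewrite !lowerK => /perm_inj/lift_inj.
exists (perm lower_inj); apply/permP => x.
by case: (unliftP i x) => [k|] ->; rewrite ?lift_perm_id // lift_perm_lift permE.
Qed.

Lemma sum_lift_perm (G : 'S_n.+1 -> R) :
  \sum_(s : 'S_n.+1 | s i == j) G s = \sum_(t : 'S_n) G (lift_perm i j t).
Proof.
rewrite -(big_imset _ (in2W lift_perm_inj)) /=; apply: eq_bigl => s.
apply/eqP/imsetP => [/lift_permP[t ->] | [t _ ->]]; last exact: lift_perm_id.
by exists t.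
Qed.

End SumLiftPerm.

Section PairPerm.
Variable K : nat.

Lemma pair_idx_subproof (i : 'I_K) (b : bool) : (i.*2 + b < K.*2)%N.
Proof. by case: i b => i /= ltiK [|]; lia. Qed.

Definition pair_idx (i : 'I_K) (b : bool) : 'I_(K.*2) :=
  Ordinal (pair_idx_subproof i b).

Definition half_ord (x : 'I_(K.*2)) : 'I_K :=
  Ordinal (etrans (ltn_half_double x K) (ltn_ord x)).

Lemma half_pair_idx i b : half_ord (pair_idx i b) = i.
Proof. by apply: val_inj; rewrite /= addnC half_bit_double. Qed.

Lemma odd_pair_idx i b : odd (pair_idx i b) = b.
Proof. by rewrite /= oddD odd_double; case: b. Qed.

Lemma pair_idx_half x : pair_idx (half_ord x) (odd x) = x.
Proof. by apply: val_inj; rewrite /= addnC odd_double_half. Qed.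

Definition pair_perm_fun (sg : 'S_K) (c : bool) (x : 'I_(K.*2)) :=
  pair_idx (sg (half_ord x)) (odd x (+) c).

Lemma pair_perm_funK sg c : cancel (pair_perm_fun sg c) (pair_perm_fun sg^-1 c).
Proof.
move=> x; rewrite /pair_perm_fun half_pair_idx odd_pair_idx permK.
by rewrite -addbA addbb addbF pair_idx_half.
Qed.

Definition pair_perm sg c : 'S_(K.*2) := perm (can_inj (pair_perm_funK sg c)).

Lemma pair_perm_idx sg c i b :
  pair_perm sg c (pair_idx i b) = pair_idx (sg i) (b (+) c).
Proof. by rewrite permE /pair_perm_fun half_pair_idx odd_pair_idx. Qed.

End PairPerm.

Lemma pair_perm_ord0 k (j : 'I_(k.+1).*2) :
  pair_perm (tperm ord0 (half_ord j)) (odd j) (pair_idx ord0 false) = j.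
Proof. by rewrite pair_perm_idx tpermL pair_idx_half. Qed.

Section ProdPairs.
Variables (R : comPzRingType) (d : nat) (A : 'M[R]_d).
Hypothesis A_sym : A^T = A.

Lemma prod_pairs_enum K (g : 'I_(K.*2) -> 'I_d) :
  prod_pairs A [seq g x | x <- enum 'I_(K.*2)] =
  \prod_(i < K) A (g (pair_idx i false)) (g (pair_idx i true)).
Proof.
elim: K g => [|K IHK] g; first by rewrite enum_ord0 big_ord0.
have -> : [seq g x | x <- enum 'I_(K.+1).*2] = g ord0 :: g (lift ord0 ord0) ::
    [seq g (lift ord0 (lift ord0 x)) | x <- enum 'I_(K.*2)].
  by rewrite !enum_ordSl /= -!map_comp.
rewrite big_ord_recl /= IHK.
congr (A (g _) (g _) * _); try exact: val_inj.
by apply: eq_bigr => i _; congr (A (g _) (g _)); apply: val_inj.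
Qed.

Lemma prod_pairs_pair_perm K (sg : 'S_K) c (g : 'I_(K.*2) -> 'I_d) :
  prod_pairs A [seq g (pair_perm sg c x) | x <- enum 'I_(K.*2)] =
  prod_pairs A [seq g x | x <- enum 'I_(K.*2)].
Proof.
have A_symE i j : A i j = A j i by rewrite -[in LHS]A_sym mxE.
rewrite !prod_pairs_enum [RHS](reindex_perm sg); apply: eq_bigr => i _.
by rewrite !pair_perm_idx; case: c; rewrite // A_symE.
Qed.

Lemma sum_perm_prod_pairs_wick k (f : 'I_(k.*2.+2) -> 'I_d) :
  \sum_(p : 'S_(k.*2.+2)) prod_pairs A [seq f (p x) | x <- enum 'I_(k.*2.+2)] =
  (k.*2.+2)%:R * \sum_(b < k.*2.+1) A (f ord0) (f (lift ord0 b)) *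
    \sum_(r : 'S_(k.*2))
      prod_pairs A [seq f (lift ord0 (lift b (r x))) | x <- enum 'I_(k.*2)].
Proof.
pose P (p : 'S_(k.*2.+2)) := prod_pairs A [seq f (p x) | x <- enum 'I_(k.*2.+2)].
have P_class j : \sum_(p : 'S_(k.*2.+2) | p j == ord0) P p =
                 \sum_(p : 'S_(k.*2.+2) | p ord0 == ord0) P p.
  pose sg := tperm ord0 (half_ord (j : 'I_(k.+1).*2)).
  pose tau : 'S_(k.*2.+2) := pair_perm sg (odd j).
  have tau0 : tau ord0 = j.
    have -> : ord0 = pair_idx (ord0 : 'I_k.+1) false by apply: val_inj.
    exact: pair_perm_ord0.
  rewrite [RHS](reindex_inj (mulgI tau)); apply: eq_big => p.
  - by rewrite (permM tau p) tau0.
  - move=> _; rewrite /P -(prod_pairs_pair_perm sg (odd j) (fun x => f (p x))).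
    by congr prod_pairs; apply: eq_map => x; rewrite (permM tau p).
rewrite (partition_big (fun p : 'S_(k.*2.+2) => (p^-1)%g ord0) xpredT) //=.
rewrite (eq_bigr (fun _ => \sum_(p : 'S_(k.*2.+2) | p ord0 == ord0) P p)); last first.
  move=> j _; rewrite -(P_class j); apply: eq_bigl => p.
  by rewrite (canF_eq (permKV p)) eq_sym.
rewrite sumr_const card_ord mulr_natl; congr (_ *+ _).
rewrite sum_lift_perm (partition_big (fun t : 'S_(k.*2.+1) => t ord0) xpredT) //=.
apply: eq_bigr => b _; rewrite sum_lift_perm mulr_sumr; apply: eq_bigr => r _.
rewrite /P !enum_ordSl /= !lift_perm_id lift_perm_lift lift_perm_id -!map_comp.
by congr (_ * prod_pairs A _); apply: eq_map => x /=; rewrite !lift_perm_lift.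
Qed.

End ProdPairs.

Lemma Sym_tuple_perm (R : fieldType) d n (T : tensor R d n) (t : n.-tuple 'I_d)
    (q : 'S_n) :
  Sym T [tuple tnth t (q j) | j < n] = Sym T t.
Proof.
rewrite /Sym [in RHS](reindex_inj (mulIg q)); congr (_ * _).
apply: eq_bigr => p _; congr (T _).
by apply: eq_from_tnth => j; rewrite !tnth_mktuple permM.
Qed.

Definition rem_at T (b : nat) (s : seq T) := take b s ++ drop b.+1 s.

Lemma map_tnth_lift T n (t : n.+1.-tuple T) (b : 'I_n.+1) :
  [seq tnth t (lift b j) | j <- enum 'I_n] = rem_at b t.
Proof.
have x0 := tnth t b.
have size_rem : size (rem_at b t) = n.
  by rewrite /rem_at size_cat size_take size_drop size_tuple ltn_ord; have := ltn_ord b; lia.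
apply: (@eq_from_nth _ x0); rewrite size_map size_enum_ord ?size_rem // => i ltin.
rewrite (nth_map (Ordinal ltin)) ?size_enum_ord // (tnth_nth x0) /= nth_enum_ord //.
rewrite /rem_at nth_cat size_take size_tuple ltn_ord /bump.
case: ltnP => [lt_ib | le_bi]; first by rewrite nth_take // leqNgt lt_ib.
by rewrite nth_drop; congr nth; lia.
Qed.

Fixpoint id_contract (R : nmodType) d (m : nat) (Phi : seq 'I_d -> R)
    (s : seq 'I_d) : R :=
  if m is m'.+1 then \sum_(u : 'I_d) id_contract m' Phi (u :: u :: s) else Phi s.

Lemma id_contract_perm (R : nmodType) d (Phi : seq 'I_d -> R) :
    (forall s s', perm_eq s s' -> Phi s = Phi s') ->
  forall m s s', perm_eq s s' -> id_contract m Phi s = id_contract m Phi s'.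
Proof.
move=> Phi_perm; elim=> [|m IHm] s s' eq_ss' /=; first exact: Phi_perm.
by apply: eq_bigr => u _; apply: IHm; rewrite !perm_cons.
Qed.

Lemma sum_tuple_cons (R : nmodType) (T : finType) n (F : n.+1.-tuple T -> R) :
  \sum_(t : n.+1.-tuple T) F t =
  \sum_(a : T) \sum_(t : n.-tuple T) F [tuple of a :: t].
Proof.
rewrite pair_big /= (reindex (fun p : T * n.-tuple T => [tuple of p.1 :: p.2])) //=.
exists (fun t => (thead t, [tuple of behead t])) => [[a t] _ | t _].
  by congr pair; apply: val_inj.
by rewrite [in RHS](tuple_eta t); apply: val_inj.
Qed.

Lemma id_contractE (R : pzRingType) d (Phi : seq 'I_d -> R) :
    (forall s s', perm_eq s s' -> Phi s = Phi s') ->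
  forall m (t : seq 'I_d),
  \sum_(x : m.*2.-tuple 'I_d) Phi (x ++ t) * prod_pairs 1%:M x = id_contract m Phi t.
Proof.
move=> Phi_perm; elim=> [|m IHm] t.
  by rewrite (big_pred1 [tuple]) => [|x]; rewrite /= ?mulr1 // (tuple0 x).
rewrite -[m.+1.*2]/(m.*2.+2) sum_tuple_cons /=; apply: eq_bigr => a _.
rewrite sum_tuple_cons (bigD1 a) //= [X in _ + X]big1 ?addr0 => [|b neq_ba].
  rewrite -IHm; apply: eq_bigr => x _.
  rewrite mxE eqxx mulr1n mul1r; congr (_ * _); apply: Phi_perm.
  by rewrite (perm_catCA [:: a; a] x t).
by apply: big1 => x _; rewrite mxE eq_sym (negbTE neq_ba) mulr0n mul0r mulr0.
Qed.

Lemma dfactS n : dfact n.+1 = (n.+1 * dfact n.-1)%N.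
Proof. by case: n. Qed.

Lemma dfact_gt0 n : (0 < dfact n)%N.
Proof. by elim/ltn_ind: n => -[|[|n]] // IHn; rewrite /= muln_gt0 IHn. Qed.

Lemma dfact_doubleS k : dfact (k.+1.*2).-1 = (k.*2.+1 * dfact (k.*2).-1)%N.
Proof. by rewrite doubleS -[(k.*2.+2).-1]/(k.*2.+1) dfactS. Qed.

Section Coef.
Variable R : numFieldType.

Lemma dcoef_1 k : dcoef R k.+1 1 = (k.*2.+1)%:R^-1.
Proof.
rewrite /dcoef subn1 subSS subn0 expn0 mul1n !mul2n dfact_doubleS -mulnA.
rewrite [X in _ / X]natrM invfM mulrCA mulfV ?mulr1 //.
by rewrite pnatr_eq0 -lt0n muln_gt0 dfact_gt0 fact_gt0.
Qed.

Lemma dcoefSS k s :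
  dcoef R k.+2 s.+2 = (k.+1.*2)%:R / (k.+1.*2.+1)%:R * dcoef R k.+1 s.+1.
Proof.
rewrite /dcoef !subSS !subn0 !mul2n dfact_doubleS expnS factS.
set X := dfact _.
have -> : (2 * 2 ^ s * X * (k.+1 * k`!) = k.+1.*2 * (2 ^ s * X * k`!))%N.
  by rewrite -mul2n; ring.
rewrite -[(k.+1.*2.+1 * _ * _)%N]mulnA (natrM _ k.+1.*2) (natrM _ k.+1.*2.+1).
by rewrite invfM mulrACA.
Qed.

End Coef.

Section Contraction.
Variables (R : numFieldType) (d : nat) (A : 'M[R]_d).
Hypothesis A_sym : A^T = A.

Definition stpow (s : seq 'I_d) : R := mx_stpow A (size s) (in_tuple s).

Lemma mx_stpowE n (t : n.-tuple 'I_d) : mx_stpow A n t = stpow t.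
Proof.
case: t => s sz; have /eqP size_s := sz; subst n.
by congr mx_stpow; apply: val_inj.
Qed.

Lemma stpow_perm s s' : perm_eq s s' -> stpow s = stpow s'.
Proof.
move=> eq_ss'; have /tuple_permP[q ->] : perm_eq s (in_tuple s') by [].
by rewrite -mx_stpowE /mx_stpow Sym_tuple_perm.
Qed.

Lemma mx_stpow_cons_wick k x (t : (k.*2.+1).-tuple 'I_d) :
  (k.*2.+1)%:R * mx_stpow A (k.*2.+2) [tuple of x :: t] =
  \sum_(b < k.*2.+1)
    A x (tnth t b) * mx_stpow A (k.*2) [tuple tnth t (lift b j) | j < k.*2].
Proof.
rewrite /mx_stpow /Sym /mx_tpow /= sum_perm_prod_pairs_wick // !mulr_sumr.
apply: eq_bigr => b _; rewrite tnth0 tnthS.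
set S := (\sum_(r : 'S_(k.*2)) _ in RHS).
have -> : \sum_(r : 'S_(k.*2)) prod_pairs A
    [seq tnth [tuple of x :: t] (lift ord0 (lift b (r j))) | j <- enum 'I_(k.*2)] = S.
  apply: eq_bigr => r _; congr prod_pairs; apply: eq_map => j.
  by rewrite tnthS tnth_mktuple.
have fact_neq0 n : (n`!%:R : R) != 0 by rewrite pnatr_eq0 -lt0n fact_gt0.
rewrite !factS !natrM; field.
by rewrite fact_neq0 nat1r -natrD !pnatr_eq0.
Qed.

Lemma stpow_cons_wick x s : odd (size s) ->
  (size s)%:R * stpow (x :: s) =
  \sum_(0 <= b < size s) A x (nth x s b) * stpow (rem_at b s).
Proof.
move=> odd_s; have [k size_s] : exists k, size s = k.*2.+1.
  by exists (size s)./2; rewrite -[LHS]odd_double_half odd_s.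
pose t : (k.*2.+1).-tuple 'I_d := Tuple (introT eqP size_s).
have -> : stpow (x :: s) = mx_stpow A k.*2.+2 [tuple of x :: t] by rewrite mx_stpowE.
rewrite size_s mx_stpow_cons_wick big_mkord; apply: eq_bigr => b _.
by rewrite (tnth_nth x) mx_stpowE /= map_tnth_lift.
Qed.

Lemma contract_mx_stpow_tpow1 m n (t : n.-tuple 'I_d) :
  contract (mx_stpow A (m.*2 + n)) (mx_tpow 1%:M m.*2) t = id_contract m stpow t.
Proof.
rewrite /contract -(id_contractE stpow_perm); apply: eq_bigr => x _.
by rewrite mx_stpowE.
Qed.

Local Notation C m := (id_contract m stpow).

Lemma id_contract_cons_wick m x s : odd (size s) ->
  (m.*2 + size s)%:R * C m (x :: s) =
  \sum_(0 <= b < size s) A x (nth x s b) * C m (rem_at b s)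
  + m.*2%:R * \sum_(v : 'I_d) A x v * C m.-1 (v :: s).
Proof.
elim: m s => [|m IHm] s odd_s.
  by rewrite /= mul0r addr0 add0n stpow_cons_wick.
have C_swap u s' : C m (x :: u :: u :: s') = C m (u :: u :: x :: s').
  by apply: id_contract_perm stpow_perm _ _ _ _; rewrite (perm_catCA [:: x] [:: u; u]).
have IHu u : (m.*2 + (size s).+2)%:R * C m (x :: u :: u :: s) =
    2%:R * (A x u * C m (u :: s))
    + \sum_(0 <= b < size s) A x (nth x s b) * C m (u :: u :: rem_at b s)
    + m.*2%:R * \sum_(v : 'I_d) A x v * C m.-1 (v :: u :: u :: s).
  rewrite (IHm (u :: u :: s)) /= ?negbK // big_ltn // big_ltn // !big_add1 /=.
  by rewrite /rem_at /= drop0; ring.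
have C_shift : m.*2%:R * \sum_(v : 'I_d) A x v * C m (v :: s) =
    \sum_(u : 'I_d) m.*2%:R * \sum_(v : 'I_d) A x v * C m.-1 (v :: u :: u :: s).
  case: m {IHm C_swap IHu} => [|m].
    by rewrite mul0r big1 // => u _; rewrite mul0r.
  rewrite -mulr_sumr exchange_big; congr (_ * _); apply: eq_bigr => v _.
  rewrite -mulr_sumr; congr (_ * _); apply: eq_bigr => u _.
  apply: id_contract_perm stpow_perm _ _ _ _.
  by rewrite (perm_catCA [:: u; u] [:: v]).
transitivity (\sum_(u : 'I_d) (m.*2 + (size s).+2)%:R * C m (x :: u :: u :: s)).
  rewrite /= mulr_sumr; apply: eq_bigr => u _; rewrite C_swap; congr (_%:R * _).
  by rewrite doubleS; lia.
rewrite (eq_bigr _ (fun u _ => IHu u)) !big_split /= -C_shift -mulr_sumr.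
have -> : \sum_(u < d) \sum_(0 <= b < size s) A x (nth x s b) * C m (u :: u :: rem_at b s)
          = \sum_(0 <= b < size s) A x (nth x s b) * C m.+1 (rem_at b s).
  by rewrite exchange_big; apply: eq_bigr => b _; rewrite mulr_sumr.
by rewrite doubleS -addn2 natrD; ring.
Qed.

Definition contr_mx m : 'M[R]_d := \matrix_(i, j) C m [:: i; j].
Definition contr_scal m : R := C m [::].

Lemma contr_scal0 : contr_scal 0 = 1.
Proof.
rewrite /contr_scal /stpow /mx_stpow /Sym /mx_tpow /= (eq_bigr (fun=> 1)) => [|p _].
  by rewrite sumr_const card_Sn invr1 mul1r.
by rewrite enum_ord0.
Qed.

Lemma contr_mx_rec m :
  (m.*2.+1)%:R *: contr_mx m = contr_scal m *: A + m.*2%:R *: (A *m contr_mx m.-1).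
Proof.
apply/matrixP => i j; rewrite !mxE.
rewrite -addn1 (id_contract_cons_wick m i (s := [:: j])) // big_nat1 mulrC.
by congr (_ + _ * _); apply: eq_bigr => v _; rewrite mxE.
Qed.

Lemma contr_mx_expansion m :
  contr_mx m =
  \sum_(1 <= s < m.+2) (dcoef R m.+1 s * contr_scal (m.+1 - s)) *: A ^+ s.
Proof.
elim: m => [|m IHm].
  have := contr_mx_rec 0; rewrite scale1r scale0r addr0 => ->.
  by rewrite big_nat1 dcoef_1 contr_scal0 invr1 mulr1 expr1.
have odd_neq0 : ((m.+1.*2.+1)%:R : R) != 0 by rewrite pnatr_eq0.
rewrite -[LHS](scalerK odd_neq0) contr_mx_rec IHm [RHS]big_nat_recl //.
rewrite dcoef_1 subn1 /= scalerDr scalerA expr1; congr (_ + _).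
rewrite mulmx_sumr !scaler_sumr; apply: eq_big_nat => -[|s] // _ /=.
rewrite dcoefSS !subSS (exprS A s.+1) -mulmxE.
by rewrite !scalemxAr !scalerA [_ / _]mulrC !mulrA.
Qed.

End Contraction.

Theorem lemma29 (R : realFieldType) (d : nat) (A : 'M[R]_d) (k : nat)
    (hsym : A^T = A) (htr : \tr A = 0) (hk : (1 <= k)%N) :
  mx_of2 (contract (mx_stpow A ((k - 1).*2 + 2)) (mx_tpow 1%:M ((k - 1).*2)))
  = \sum_(1 <= s < k.+1)
      (dcoef R k s *
       scal_of0 (contract (mx_stpow A ((k - s).*2 + 0))
                          (mx_tpow 1%:M ((k - s).*2)))) *: A ^+ s.
Proof.
case: k hk => [//|k] _; rewrite subn1 /=.
have -> : mx_of2 (contract (mx_stpow A (k.*2 + 2)) (mx_tpow 1%:M k.*2)) = contr_mx A k.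
  by apply/matrixP => i j; rewrite !mxE contract_mx_stpow_tpow1.
rewrite contr_mx_expansion //; apply: eq_bigr => s _.
by rewrite /scal_of0 contract_mx_stpow_tpow1.
Qed.
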